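(* Let $\ell:\mathcal{R}\to\mathbb{R}^{\mathcal{Y}}_+$ be a discrete loss, $L:\mathbb{R}^d\to\mathbb{R}^{\mathcal{Y}}_+$ a polyhedral loss, and $\psi:\mathbb{R}^d\to\mathcal{R}$ a link such that $(L,\psi)$ is consistent for $\ell$. Then there exists $c>0$ such that for all hypotheses $h:\mathcal{X}\to\mathbb{R}^d$ and all data distributions $\mathcal{D}$ on $\mathcal{X}\times\mathcal{Y}$, $R_\ell(\psi\circ h;\mathcal{D})\le c\cdot R_L(h;\mathcal{D})$.
   Context: $\mathcal{Y}$ is a finite label set and $\mathcal{X}$ a feature space; $\mathbb{R}^{\mathcal{Y}}_+$ is the nonnegative orthant. A loss $L:\mathcal{R}\to\mathbb{R}^{\mathcal{Y}}_+$ assigns a loss $L(r)_y$ to report $r$ and label $y$; it is discrete if $\mathcal{R}$ is finite; $L:\mathbb{R}^d\to\mathbb{R}^{\mathcal{Y}}_+$ is polyhedral if each $u\mapsto L(u)_y$ is a pointwise maximum of finitely many affine functions. Regrets: $R_L(h;\mathcal{D})=\mathbb{E}_{(X,Y)\sim\mathcal{D}}L(h(X))_Y-\inf_{h'}\mathbb{E}_{\mathcal{D}}L(h'(X))_Y$ and $R_\ell(g;\mathcal{D})=\mathbb{E}_{\mathcal{D}}\ell(g(X))_Y-\inf_{g'}\mathbb{E}_{\mathcal{D}}\ell(g'(X))_Y$, infima over all measurable $h':\mathcal{X}\to\mathbb{R}^d$, $g':\mathcal{X}\to\mathcal{R}$; hypotheses are measurable. $(L,\psi)$ is consistent for $\ell$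 if for every distribution $\mathcal{D}$ on $\mathcal{X}\times\mathcal{Y}$ and every sequence of hypotheses $h_1,h_2,\dots$ with $R_L(h_i;\mathcal{D})\to0$, we have $R_\ell(\psi\circ h_i;\mathcal{D})\to0$. *)

From HB Require Import structures.
From mathcomp Require Import all_boot all_order all_algebra.
From mathcomp Require Import all_classical all_reals all_analysis.
Set Implicit Arguments. Unset Strict Implicit. Unset Printing Implicit Defensive.
Import Order.TTheory GRing.Theory Num.Theory.
Local Open Scope classical_set_scope.
Local Open Scope ring_scope.

(* The finite label set Y, realised as {0,...,n} (a nonempty finite set),
   equipped with the discrete sigma-algebra. *)
Definition label (n : nat) : Type := 'I_n.+1.
HB.instance Definition _ n := Finite.on (label n).
HB.instance Definition _ n := isPointed.Build (label n) ord0.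
HB.instance Definition _ n := @isMeasurable.Build default_measure_display
  (label n) discrete_measurable discrete_measurable0
  discrete_measurableC discrete_measurableU.

(* Borel sigma-algebra on R^d (= row vectors 'rV[R]_d), i.e. the sigma-algebra
   generated by the coordinate projections. *)
Definition rV_borel (R : realType) (d : nat) : set (set 'rV[R]_d) :=
  <<s [set C | exists (i : 'I_d) (B : set R),
          measurable B /\ C = (fun u : 'rV[R]_d => u ord0 i) @^-1` B] >>.

Definition meas_rV (dX : measure_display) (X : measurableType dX)
  (R : realType) (d : nat) (h : X -> 'rV[R]_d) : Prop :=
  forall A, rV_borel A -> measurable (h @^-1` A).

Definition meas_fin (dX : measure_display) (X : measurableType dX)
  (Rep : finType) (g : X -> Rep) : Prop :=
  forall r : Rep, measurable (g @^-1` [set r]).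

Definition meas_link (R : realType) (d : nat) (Rep : finType)
  (psi : 'rV[R]_d -> Rep) : Prop :=
  forall r : Rep, rV_borel (psi @^-1` [set r]).

Definition polyhedral (R : realType) (d n : nat) (L : 'rV[R]_d -> label n -> R)
  : Prop :=
  forall y : label n, exists (m : nat) (a : 'I_m.+1 -> 'rV[R]_d) (b : 'I_m.+1 -> R),
    forall u : 'rV[R]_d,
      (forall k, \sum_(i < d) a k ord0 i * u ord0 i + b k <= L u y) /\
      (exists k, L u y = \sum_(i < d) a k ord0 i * u ord0 i + b k).

Local Open Scope ereal_scope.

Definition riskL (dX : measure_display) (X : measurableType dX) (R : realType)
  (d n : nat) (L : 'rV[R]_d -> label n -> R)
  (D : probability (X * label n)%type R) (h : X -> 'rV[R]_d) : \bar R :=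
  \int[D]_p (L (h p.1) p.2)%:E.

Definition regretL (dX : measure_display) (X : measurableType dX) (R : realType)
  (d n : nat) (L : 'rV[R]_d -> label n -> R)
  (D : probability (X * label n)%type R) (h : X -> 'rV[R]_d) : \bar R :=
  riskL L D h - ereal_inf [set riskL L D h' | h' in [set h' | meas_rV h']].

Definition riskl (dX : measure_display) (X : measurableType dX) (R : realType)
  (n : nat) (Rep : finType) (l : Rep -> label n -> R)
  (D : probability (X * label n)%type R) (g : X -> Rep) : \bar R :=
  \int[D]_p (l (g p.1) p.2)%:E.

Definition regretl (dX : measure_display) (X : measurableType dX) (R : realType)
  (n : nat) (Rep : finType) (l : Rep -> label n -> R)
  (D : probability (X * label n)%type R) (g : X -> Rep) : \bar R :=
  riskl l D g - ereal_inf [set riskl l D g' | g' in [set g' | meas_fin g']].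

Definition consistent (dX : measure_display) (X : measurableType dX)
  (R : realType) (d n : nat) (Rep : finType)
  (L : 'rV[R]_d -> label n -> R) (psi : 'rV[R]_d -> Rep)
  (l : Rep -> label n -> R) : Prop :=
  forall (D : probability (X * label n)%type R) (hs : nat -> X -> 'rV[R]_d),
    (forall k, meas_rV (hs k)) ->
    (fun k => regretL L D (hs k)) @ \oo --> 0 ->
    (fun k => regretl l D (psi \o hs k)) @ \oo --> 0.

From HB Require Import structures.
From mathcomp Require Import all_boot all_order all_algebra.
From mathcomp Require Import all_classical all_reals all_analysis.
From mathcomp Require Import measurable_realfun.
From mathcomp Require Import ring lra.
Import Order.TTheory GRing.Theory Num.Theory.
Local Open Scope classical_set_scope.
Local Open Scope ring_scope.
Set Implicit Arguments. Unset Strict Implicit. Unset Printing Implicit Defensive.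

(* The epigraph {(z, u) | forall y, L u y <= z y} of a polyhedral loss is a
   polyhedron.  Eliminating u by Fourier-Motzkin describes the achievable loss
   vectors {z | exists u, L u <= z} by finitely many inequalities c . z <= b with
   c <= 0, and back-substitution picks a witness u measurably in z.
   Consistency, tested on point masses, gives calibration: if psi u is strictly
   suboptimal for the label distribution proportional to -c, then c . L u stays
   a fixed margin below b.  Hence for C large enough the shifted vector
   L u - (l (psi u) - l r) / C is still achievable for all u and r, so every
   hypothesis g can be matched by a measurable h' with
   l (psi (h x)) + C L (h' x) <= l (g x) + C L (h x) pointwise.  Integrating and
   taking infima over g and h' gives R_l(psi o h) <= C R_L(h). *)

Section FourierMotzkin.
Variable R : realFieldType.

(* [(a, b)] encodes the inequality [\sum_(i < m) a i * x i <= b], the number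
   [m] of variables being passed separately. *)
Definition constraint := ((nat -> R) * R)%type.
Implicit Types (c : constraint) (cs : seq constraint) (x : nat -> R).

Definition cstr_lhs m c x := \sum_(i < m) c.1 i * x i.
Definition cstr_sat m c x := cstr_lhs m c x <= c.2.
Definition cstrs_sat m cs x := all (fun c => cstr_sat m c x) cs.

Definition fm_comb m cp cn : constraint :=
  (fun i => - cn.1 m * cp.1 i + cp.1 m * cn.1 i, - cn.1 m * cp.2 + cp.1 m * cn.2).

Definition fm_elim m cs :=
  [seq c <- cs | c.1 m == 0] ++
  [seq fm_comb m cp cn | cp <- [seq c <- cs | 0 < c.1 m],
                         cn <- [seq c <- cs | c.1 m < 0]].

Definition cstr_bound m c x := (c.2 - cstr_lhs m c x) / c.1 m.

(* The largest lower bound on [x m], defaulting to the smallest upper bound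
   (or 0); [fm_comb] makes it feasible when [fm_elim m cs] holds. *)
Definition fm_pick m cs x :=
  \big[Num.max/ \big[Num.min/0]_(c <- cs | 0 < c.1 m) cstr_bound m c x]_(c <- cs | c.1 m < 0)
    cstr_bound m c x.

Definition set_coord x m t := fun i => if i == m then t else x i.

Lemma cstr_lhsS m c x : cstr_lhs m.+1 c x = cstr_lhs m c x + c.1 m * x m.
Proof. by rewrite /cstr_lhs big_ord_recr. Qed.

Lemma eq_cstr_lhs m c x x' :
  (forall i, (i < m)%N -> x i = x' i) -> cstr_lhs m c x = cstr_lhs m c x'.
Proof. by move=> exx'; apply: eq_bigr => i _; rewrite exx'. Qed.

Lemma eq_cstrs_sat m cs x x' :
  (forall i, (i < m)%N -> x i = x' i) -> cstrs_sat m cs x = cstrs_sat m cs x'.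
Proof. by move=> exx'; apply: eq_all => c; rewrite /cstr_sat (eq_cstr_lhs _ exx'). Qed.

Lemma cstr_lhs_comb m cp cn x :
  cstr_lhs m (fm_comb m cp cn) x = - cn.1 m * cstr_lhs m cp x + cp.1 m * cstr_lhs m cn x.
Proof.
rewrite /cstr_lhs !mulr_sumr -big_split; apply: eq_bigr => i _.
by rewrite mulrDl !mulrA.
Qed.

Lemma cstr_lhs_set_coord m c x t : cstr_lhs m c (set_coord x m t) = cstr_lhs m c x.
Proof. by apply: eq_cstr_lhs => i lt_im; rewrite /set_coord (ltn_eqF lt_im). Qed.

Lemma cstr_sat_set_coord m c x t :
  cstr_sat m.+1 c (set_coord x m t) = (cstr_lhs m c x + c.1 m * t <= c.2).
Proof. by rewrite /cstr_sat cstr_lhsS cstr_lhs_set_coord /set_coord eqxx. Qed.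

Lemma cstr_sat_pos m c x t : 0 < c.1 m ->
  (cstr_lhs m c x + c.1 m * t <= c.2) = (t <= cstr_bound m c x).
Proof. by move=> cm_gt0; rewrite /cstr_bound ler_pdivlMr // mulrC lerBrDl. Qed.

Lemma cstr_sat_neg m c x t : c.1 m < 0 ->
  (cstr_lhs m c x + c.1 m * t <= c.2) = (cstr_bound m c x <= t).
Proof. by move=> cm_lt0; rewrite /cstr_bound ler_ndivrMr // mulrC lerBrDl. Qed.

Lemma fm_comb_sat m cp cn x : 0 < cp.1 m -> cn.1 m < 0 ->
  cstr_sat m.+1 cp x -> cstr_sat m.+1 cn x -> cstr_sat m (fm_comb m cp cn) x.
Proof.
rewrite /cstr_sat !cstr_lhsS cstr_lhs_comb /= => cp_gt0 cn_lt0 satp satn.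
have ncn_ge0 : 0 <= - cn.1 m by rewrite oppr_ge0 ltW.
have := lerD (ler_wpM2l ncn_ge0 satp) (ler_wpM2l (ltW cp_gt0) satn).
by apply: le_trans; rewrite le_eqVlt; apply/orP; left; apply/eqP; ring.
Qed.

Lemma fm_comb_bound m cp cn x : 0 < cp.1 m -> cn.1 m < 0 ->
  cstr_sat m (fm_comb m cp cn) x -> cstr_bound m cn x <= cstr_bound m cp x.
Proof.
rewrite /cstr_sat cstr_lhs_comb /cstr_bound /= => cp_gt0 cn_lt0 sat_comb.
rewrite ler_ndivrMr // -subr_ge0.
have -> : cn.2 - cstr_lhs m cn x - (cp.2 - cstr_lhs m cp x) / cp.1 m * cn.1 m =
    (- cn.1 m * cp.2 + cp.1 m * cn.2 -
     (- cn.1 m * cstr_lhs m cp x + cp.1 m * cstr_lhs m cn x)) / cp.1 m.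
  by field; rewrite gt_eqF.
by rewrite divr_ge0 ?subr_ge0 // ltW.
Qed.

Lemma cstrs_satP (m : nat) cs x :
  reflect (forall c, c \in cs -> cstr_sat m c x) (cstrs_sat m cs x).
Proof. exact: allP. Qed.

Lemma fm_elim_sound m cs x : cstrs_sat m.+1 cs x -> cstrs_sat m (fm_elim m cs) x.
Proof.
move/cstrs_satP=> sat_cs; apply/cstrs_satP => c; rewrite mem_cat => /orP[|].
  rewrite mem_filter => /andP[/eqP cm0 /sat_cs].
  by rewrite /cstr_sat cstr_lhsS cm0 mul0r addr0.
case/allpairsP => -[cp cn] /= [+ + ->]; rewrite !mem_filter.
by move=> /andP[cp_gt0 /sat_cs satp] /andP[cn_lt0 /sat_cs satn]; apply: fm_comb_sat.
Qed.

Lemma cstr_bound_le_fm_pick m cs x c : c \in cs -> c.1 m < 0 ->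
  cstr_bound m c x <= fm_pick m cs x.
Proof. exact: le_bigmax_seq. Qed.

Lemma fm_pick_le_cstr_bound m cs x c : cstrs_sat m (fm_elim m cs) x ->
  c \in cs -> 0 < c.1 m -> fm_pick m cs x <= cstr_bound m c x.
Proof.
move=> /cstrs_satP sat_elim cs_c cm_gt0.
rewrite /fm_pick big_seq_cond; apply: bigmax_le => [|cn /andP[cs_cn cn_lt0]].
  exact: ge_bigmin_seq.
apply: fm_comb_bound => //; apply: sat_elim; rewrite mem_cat; apply/orP; right.
by apply/allpairsP; exists (c, cn); rewrite !mem_filter cm_gt0 cn_lt0 cs_c cs_cn.
Qed.

Lemma fm_elim_complete m cs x : cstrs_sat m (fm_elim m cs) x ->
  cstrs_sat m.+1 cs (set_coord x m (fm_pick m cs x)).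
Proof.
move=> sat_elim; apply/cstrs_satP => c cs_c; rewrite cstr_sat_set_coord.
case: (ltgtP (c.1 m) 0) => cm.
- by rewrite cstr_sat_neg // cstr_bound_le_fm_pick.
- by rewrite cstr_sat_pos // fm_pick_le_cstr_bound.
- rewrite cm mul0r addr0; apply: (cstrs_satP _ _ _ sat_elim).
  by rewrite mem_cat mem_filter cm eqxx cs_c.
Qed.

Fixpoint fm_elimn m k cs :=
  if k is k'.+1 then fm_elimn m k' (fm_elim (m + k') cs) else cs.

Fixpoint fm_lift m k cs x :=
  if k is k'.+1 then
    let x' := fm_lift m k' (fm_elim (m + k') cs) x in
    set_coord x' (m + k') (fm_pick (m + k') cs x')
  else x.

Lemma fm_elimn_sound m k cs x : cstrs_sat (m + k) cs x -> cstrs_sat m (fm_elimn m k cs) x.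
Proof.
elim: k cs => [|k IHk] cs /=; first by rewrite addn0.
by rewrite addnS => /fm_elim_sound /IHk.
Qed.

Lemma fm_elimn_complete m k cs x :
  cstrs_sat m (fm_elimn m k cs) x -> cstrs_sat (m + k) cs (fm_lift m k cs x).
Proof.
elim: k cs => [|k IHk] cs /=; first by rewrite addn0.
by move=> /IHk /fm_elim_complete; rewrite addnS.
Qed.

Lemma fm_lift_id m k cs x i : (i < m)%N -> fm_lift m k cs x i = x i.
Proof.
move=> lt_im; elim: k cs => [|k IHk] cs //=.
by rewrite /set_coord ltn_eqF ?IHk // ltn_addr.
Qed.

End FourierMotzkin.

Section EpigraphProjection.
Variables (R : realFieldType) (d n : nat).

Definition affine (q : 'rV[R]_d * R) (u : 'rV[R]_d) :=
  \sum_(i < d) q.1 ord0 i * u ord0 i + q.2.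

(* Points of [R^(n+1) x R^d] are encoded as [nat -> R]: the label coordinates
   come first, the [d] surrogate coordinates start at index [n.+1]. *)
Definition label_ext (z : label n -> R) (j : nat) : R :=
  if insub j is Some y then z y else 0.
Definition row_ext (u : 'rV[R]_d) (j : nat) : R :=
  if insub j is Some i then u ord0 i else 0.
Definition epi_point (z : label n -> R) (u : 'rV[R]_d) (j : nat) : R :=
  if (j < n.+1)%N then label_ext z j else row_ext u (j - n.+1).
Definition epi_row (x : nat -> R) : 'rV[R]_d := \row_i x (n.+1 + i)%N.

Definition epi_cstr (y : label n) (q : 'rV[R]_d * R) : constraint R :=
  (fun j => if (j < n.+1)%N then - (j == y)%:R else row_ext q.1 (j - n.+1), - q.2).

Lemma label_extE z (y : label n) : label_ext z y = z y.
Proof. by rewrite /label_ext valK. Qed.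

Lemma row_extE u (i : 'I_d) : row_ext u i = u ord0 i.
Proof. by rewrite /row_ext valK. Qed.

Lemma epi_row_point z u : epi_row (epi_point z u) = u.
Proof.
by apply/rowP => i; rewrite mxE /epi_point ltnNge leq_addr addKn row_extE.
Qed.

Lemma epi_point_label z u (y : label n) : epi_point z u y = z y.
Proof. by rewrite /epi_point ltn_ord label_extE. Qed.

Lemma cstr_lhs_label_ext c z :
  cstr_lhs n.+1 c (label_ext z) = \sum_(y : label n) c.1 y * z y.
Proof. by apply: eq_bigr => y _; rewrite label_extE. Qed.

Lemma cstr_sat_epi y q x :
  cstr_sat (n.+1 + d) (epi_cstr y q) x = (affine q (epi_row x) <= x y).
Proof.
rewrite /cstr_sat /cstr_lhs big_split_ord /= (bigD1 y) //= ltn_ord eqxx mulN1r.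
rewrite big1 => [|j /negbTE nj]; last by rewrite ltn_ord val_eqE nj mulr0n oppr0 mul0r.
rewrite (eq_bigr (fun i : 'I_d => q.1 ord0 i * epi_row x ord0 i)) => [|i _].
  by rewrite /affine; apply/idP/idP => ?; lra.
by rewrite ltnNge leq_addr /= addKn row_extE mxE.
Qed.

Variables (L : 'rV[R]_d -> label n -> R) (pc : label n -> seq ('rV[R]_d * R)).
Hypothesis pc_le : forall y u q, q \in pc y -> affine q u <= L u y.
Hypothesis pc_attained : forall y u, exists2 q, q \in pc y & L u y = affine q u.

(* [proj_cstrs] cuts out [{z | exists u, forall y, L u y <= z y}] and
   [epi_select z] is such a [u]. *)
Definition epi_cstrs := [seq epi_cstr y q | y <- enum 'I_n.+1, q <- pc y].
Definition proj_cstrs := fm_elimn n.+1 d epi_cstrs.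
Definition epi_select (z : label n -> R) : 'rV[R]_d :=
  epi_row (fm_lift n.+1 d epi_cstrs (label_ext z)).

Lemma epi_cstrs_sat_of_le x : (forall y, L (epi_row x) y <= x y) ->
  cstrs_sat (n.+1 + d) epi_cstrs x.
Proof.
move=> le_L; apply/cstrs_satP => _ /allpairsPdep[y [q [_ pc_q ->]]].
by rewrite cstr_sat_epi (le_trans (pc_le _ pc_q) (le_L y)).
Qed.

Lemma epi_cstrs_sat_le x : cstrs_sat (n.+1 + d) epi_cstrs x ->
  forall y, L (epi_row x) y <= x y.
Proof.
move=> /cstrs_satP sat_epi y; have [q pc_q ->] := pc_attained y (epi_row x).
by rewrite -cstr_sat_epi; apply: sat_epi; apply/allpairsPdep; exists y, q; rewrite mem_enum.
Qed.

Lemma proj_cstrs_sat u z : (forall y, L u y <= z y) ->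
  cstrs_sat n.+1 proj_cstrs (label_ext z).
Proof.
move=> le_L; have /epi_cstrs_sat_of_le/fm_elimn_sound :
    forall y, L (epi_row (epi_point z u)) y <= epi_point z u y.
  by move=> y; rewrite epi_row_point epi_point_label.
by rewrite (eq_cstrs_sat _ (x' := label_ext z)) // => j lt_jn; rewrite /epi_point lt_jn.
Qed.

Lemma epi_select_le z : cstrs_sat n.+1 proj_cstrs (label_ext z) ->
  forall y, L (epi_select z) y <= z y.
Proof.
move=> /fm_elimn_complete/epi_cstrs_sat_le le_L y.
by have := le_L y; rewrite fm_lift_id ?label_extE.
Qed.

Lemma proj_cstr_le c u : c \in proj_cstrs -> \sum_(y : label n) c.1 y * L u y <= c.2.
Proof.
move=> proj_c; have /cstrs_satP/(_ c proj_c) := @proj_cstrs_sat u (L u) (fun y => lexx _).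
by rewrite /cstr_sat cstr_lhs_label_ext.
Qed.

(* The achievable set is upward closed. *)
Lemma proj_cstr_le0 c : c \in proj_cstrs -> forall y : label n, c.1 y <= 0.
Proof.
move=> proj_c y; rewrite leNgt; apply/negP => cy_gt0.
pose S := \sum_(y' : label n) c.1 y' * L 0 y'.
pose t := (`|c.2 - S| + 1) / c.1 y.
have t_ge0 : 0 <= t by rewrite divr_ge0 ?ltW // ltr_pwDr.
pose z y' := L 0 y' + (y' == y)%:R * t.
have /cstrs_satP/(_ c proj_c) : cstrs_sat n.+1 proj_cstrs (label_ext z).
  by apply: (proj_cstrs_sat (u := 0)) => y'; rewrite /z lerDl mulr_ge0.
rewrite /cstr_sat cstr_lhs_label_ext.
have -> : \sum_(y' : label n) c.1 y' * z y' = S + (`|c.2 - S| + 1).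
  have <- : c.1 y * t = `|c.2 - S| + 1 by rewrite mulrC divfK ?gt_eqF.
  rewrite (eq_bigr (fun y' : label n => c.1 y' * L 0 y' + c.1 y' * ((y' == y)%:R * t))).
    rewrite big_split /= -/S; congr (_ + _).
    rewrite (bigD1 y) //= eqxx mul1r big1 ?addr0 // => y' /negbTE ->.
    by rewrite mul0r mulr0.
  by move=> y' _; rewrite mulrDr.
by have := ler_norm (c.2 - S); lra.
Qed.

Definition shift_loss (C : R) (z a b : label n -> R) (y : label n) :=
  z y - (a y - b y) / C.

Lemma epi_select_shift C u (a b : label n -> R) : 0 < C ->
  cstrs_sat n.+1 proj_cstrs (label_ext (shift_loss C (L u) a b)) ->
  forall y, a y + C * L (epi_select (shift_loss C (L u) a b)) y <= b y + C * L u y.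
Proof.
move=> C_gt0 /epi_select_le le_shift y; have := le_shift y.
rewrite /shift_loss -(ler_pM2l C_gt0) mulrBr mulrCA divff ?gt_eqF // mulr1.
by move=> ?; lra.
Qed.

End EpigraphProjection.

Lemma polyhedral_pieces (R : realType) (d n : nat) (L : 'rV[R]_d -> label n -> R) :
  polyhedral L -> exists pc : label n -> seq ('rV[R]_d * R),
    (forall y u q, q \in pc y -> affine q u <= L u y) /\
    (forall y u, exists2 q, q \in pc y & L u y = affine q u).
Proof.
move=> L_poly; have /choice[pc pcP] : forall y, exists s : seq ('rV[R]_d * R),
    (forall u q, q \in s -> affine q u <= L u y) /\
    (forall u, exists2 q, q \in s & L u y = affine q u).
  move=> y; have [m [a [b Lab]]] := L_poly y.
  exists [seq (a k, b k) | k <- enum 'I_m.+1]; split.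
    by move=> u _ /mapP[k _ ->]; have [+ _] := Lab u; apply.
  move=> u; have [_ [k ->]] := Lab u; exists (a k, b k) => //.
  by apply/mapP; exists k; rewrite ?mem_enum.
by exists pc; split => y; have [] := pcP y.
Qed.

Lemma pieces_bigmax (R : realFieldType) (d n : nat) (L : 'rV[R]_d -> label n -> R)
    (pc : label n -> seq ('rV[R]_d * R)) :
  (forall y u q, q \in pc y -> affine q u <= L u y) ->
  (forall y u, exists2 q, q \in pc y & L u y = affine q u) ->
  forall y u, L u y = \big[Num.max/affine (head 0 (pc y)) u]_(q <- pc y) affine q u.
Proof.
move=> pc_le pc_attained y u; have [q pc_q Lq] := pc_attained y u.
apply/le_anti/andP; split.
  by rewrite Lq (le_bigmax_seq _ _ _ (fun q' => affine q' u) pc_q).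
rewrite big_seq; apply: bigmax_le => [|q' /pc_le//].
by apply: pc_le; case: (pc y) pc_q => // q' s _; rewrite mem_head.
Qed.

Section Measurability.
Context (dX : measure_display) (X : measurableType dX) (R : realType).
Implicit Types (D : set X) (f : X -> R).

Lemma measurable_bigmaxr D (I : Type) (s : seq I) (P : pred I) (F : I -> X -> R) f :
  measurable_fun D f -> (forall i, measurable_fun D (F i)) ->
  measurable_fun D (fun x => \big[Num.max/f x]_(i <- s | P i) F i x).
Proof.
move=> mf mF; elim: s => [|i s IHs]; first by under eq_fun do rewrite big_nil.
under eq_fun do rewrite big_cons; case: (P i) => //.
exact: measurable_maxr.
Qed.

Lemma measurable_bigminr D (I : Type) (s : seq I) (P : pred I) (F : I -> X -> R) f :
  measurable_fun D f -> (forall i, measurable_fun D (F i)) ->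
  measurable_fun D (fun x => \big[Num.min/f x]_(i <- s | P i) F i x).
Proof.
move=> mf mF; elim: s => [|i s IHs]; first by under eq_fun do rewrite big_nil.
under eq_fun do rewrite big_cons; case: (P i) => //.
exact: measurable_minr.
Qed.

Section FourierMotzkinMeasurable.
Variable F : X -> nat -> R.
Hypothesis mF : forall i, measurable_fun setT (F ^~ i).

Lemma measurable_cstr_bound m c : measurable_fun setT (fun x => cstr_bound m c (F x)).
Proof.
apply: measurable_funM => //; apply: measurable_funB => //.
by apply: measurable_sum => i; apply: measurable_funM.
Qed.

Lemma measurable_fm_pick m cs : measurable_fun setT (fun x => fm_pick m cs (F x)).
Proof.
apply: measurable_bigmaxr => [|c]; last exact: measurable_cstr_bound.
by apply: measurable_bigminr => // c; exact: measurable_cstr_bound.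
Qed.

End FourierMotzkinMeasurable.

Lemma measurable_fm_lift m k cs (F : X -> nat -> R) :
  (forall i, measurable_fun setT (F ^~ i)) ->
  forall i, measurable_fun setT (fun x => fm_lift m k cs (F x) i).
Proof.
move=> mF; elim: k cs => [|k IHk] cs //= i.
by rewrite /set_coord; case: eqP => _; [exact: measurable_fm_pick | exact: IHk].
Qed.

Lemma meas_rVP d (h : X -> 'rV[R]_d) :
  meas_rV h <-> forall i, measurable_fun setT (fun x => h x ord0 i).
Proof.
split=> [h_meas i _ B mB | mh A rV_A].
  rewrite setTI; apply: (h_meas ((fun u : 'rV[R]_d => u ord0 i) @^-1` B)).
  by apply: sub_gen_smallest; exists i, B.
suff : [set A | measurable (h @^-1` A)] A by [].
apply: (smallest_sub _ _ rV_A) => [|_ [i [B [mB ->]]]] /=.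
  split => [|B mB|G mG] /=.
  - by rewrite preimage_set0; exact: measurable0.
  - by rewrite setTD -preimage_setC; exact: measurableC.
  - by rewrite preimage_bigcup; apply: bigcup_measurable => k _; exact: mG.
by have := mh i measurableT B mB; rewrite setTI.
Qed.

Lemma meas_rV_cst d (u : 'rV[R]_d) : meas_rV (fun _ : X => u).
Proof. by apply/meas_rVP => i; exact: measurable_cst. Qed.

Lemma measurable_affine_comp d (h : X -> 'rV[R]_d) q :
  meas_rV h -> measurable_fun setT (fun x => affine q (h x)).
Proof.
move=> /meas_rVP mh; apply: measurable_funD => //.
by apply: measurable_sum => i; apply: measurable_funM.
Qed.

Lemma measurable_pieces_comp d n (L : 'rV[R]_d -> label n -> R)
    (pc : label n -> seq ('rV[R]_d * R)) :
  (forall y u q, q \in pc y -> affine q u <= L u y) ->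
  (forall y u, exists2 q, q \in pc y & L u y = affine q u) ->
  forall h : X -> 'rV[R]_d, meas_rV h -> forall y, measurable_fun setT (fun x => L (h x) y).
Proof.
move=> pc_le pc_attained h mh y.
under eq_fun do rewrite (pieces_bigmax pc_le pc_attained).
by apply: measurable_bigmaxr => *; exact: measurable_affine_comp.
Qed.

Lemma meas_rV_epi_select d n (pc : label n -> seq ('rV[R]_d * R))
    (Z : X -> label n -> R) :
  (forall y, measurable_fun setT (Z ^~ y)) ->
  meas_rV (fun x => epi_select pc (Z x)).
Proof.
move=> mZ; apply/meas_rVP => i; under eq_fun do rewrite mxE.
apply: measurable_fm_lift => j; rewrite /label_ext.
by case: insubP => [y _ _|_]; [exact: mZ | exact: measurable_cst].
Qed.

Lemma meas_fin_cst (Rep : finType) (r : Rep) : meas_fin (fun _ : X => r).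
Proof.
move=> r'; rewrite preimage_cst.
by case: ifP => _; [exact: measurableT | exact: measurable0].
Qed.

Lemma meas_fin_comp d (Rep : finType) (psi : 'rV[R]_d -> Rep) (h : X -> 'rV[R]_d) :
  meas_rV h -> meas_link psi -> meas_fin (psi \o h).
Proof. by move=> mh mpsi r; exact: (mh _ (mpsi r)). Qed.

Lemma measurable_fun_meas_fin (Rep : finType) (g : X -> Rep) (phi : Rep -> R) :
  meas_fin g -> measurable_fun setT (phi \o g).
Proof.
move=> mg; rewrite (_ : phi \o g = fun x => \sum_r phi r * \1_(g @^-1` [set r]) x).
  by apply: measurable_sum => r; apply: measurable_funM => //; exact: measurable_indic.
apply/funext => x; rewrite (bigD1 (g x)) //= indicE mem_set // mulr1 big1 ?addr0 //.
by move=> r /negbTE neq_r; rewrite indicE memNset ?mulr0 //= => /esym/eqP; rewrite neq_r.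
Qed.

Lemma measurable_fun_label n (F : X -> label n -> R) :
  (forall y, measurable_fun setT (F ^~ y)) ->
  measurable_fun setT (fun p : X * label n => F p.1 p.2).
Proof.
move=> mF; rewrite (_ : (fun p => _) = fun p => \sum_y F p.1 y * (p.2 == y)%:R).
  apply: measurable_sum => y; apply: measurable_funM.
    exact: measurableT_comp (mF y) measurable_fst.
  have mlabel (f : label n -> R) : measurable_fun setT f by move=> _ B _.
  exact: (measurableT_comp (mlabel (fun k => (k == y)%:R)) measurable_snd).
apply/funext => p; rewrite (bigD1 p.2) //= eqxx mulr1 big1 ?addr0 // => y.
by rewrite eq_sym => /negbTE ->; rewrite mulr0.
Qed.

End Measurability.

Section PointMass.
Context (dX : measure_display) (X : measurableType dX) (R : realType) (n : nat).
Variables (x0 : X) (p : label n -> R).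
Hypotheses (p_ge0 : forall y, 0 <= p y) (p_sum1 : \sum_y p y = 1).

(* The [let] makes [p_sum1] a parameter of [point_prob], so that the
   probability instance below can be declared on it. *)
Definition point_prob : set (X * label n) -> \bar R := let _ := p_sum1 in
  msum (fun k => mscale (NngNum (p_ge0 (inord k))) \d_((x0, inord k) : X * label n)) n.+1.

HB.instance Definition _ := Measure.on point_prob.

Let point_prob_setT : point_prob setT = 1%E.
Proof.
rewrite (_ : point_prob setT =
  \sum_(k < n.+1) (p (inord k))%:E * \d_((x0, inord k) : X * label n) setT)%E //.
under eq_bigr do rewrite diracE mem_set // mule1.
by rewrite sumEFin -p_sum1; under eq_bigr do rewrite inord_val.
Qed.

HB.instance Definition _ := Measure_isProbability.Build _ _ _ point_prob point_prob_setT.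

Lemma integral_point_prob (f : X * label n -> \bar R) :
  measurable_fun setT f -> (forall q, 0 <= f q)%E ->
  (\int[point_prob]_q f q = \sum_y (p y)%:E * f (x0, y))%E.
Proof.
move=> mf f_ge0; rewrite ge0_integral_measure_sum //.
apply: eq_bigr => k _; rewrite ge0_integral_mscale // integral_dirac //.
by rewrite diracE mem_set // mul1e /= inord_val.
Qed.

End PointMass.

Lemma EFin_between (R : realDomainType) (a b : R) (x : \bar R) :
  (a%:E <= x)%E -> (x <= b%:E)%E -> exists r, x = r%:E.
Proof. by case: x => [r _ _| |] //; exists r. Qed.

Section Calibration.
Context (dX : measure_display) (X : measurableType dX) (R : realType) (d n : nat).
Context (Rep : finType) (l : Rep -> label n -> R) (L : 'rV[R]_d -> label n -> R).
Variables (psi : 'rV[R]_d -> Rep) (pc : label n -> seq ('rV[R]_d * R)).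
Hypotheses (l_ge0 : forall r y, 0 <= l r y) (L_ge0 : forall u y, 0 <= L u y).
Hypothesis pc_le : forall y u q, q \in pc y -> affine q u <= L u y.
Hypothesis pc_attained : forall y u, exists2 q, q \in pc y & L u y = affine q u.
Variables (x0 : X) (p : label n -> R).
Hypotheses (p_ge0 : forall y, 0 <= p y) (p_sum1 : \sum_y p y = 1).

Let P := point_prob x0 p_ge0 p_sum1.

Lemma riskL_point_prob h : meas_rV h -> riskL L P h = (\sum_y p y * L (h x0) y)%:E.
Proof.
move=> mh; rewrite /riskL integral_point_prob //.
- by rewrite -sumEFin; apply: eq_bigr => y _; rewrite EFinM.
- apply/measurable_EFinP; apply: (measurable_fun_label (F := fun x y => L (h x) y)).
  exact: (measurable_pieces_comp pc_le pc_attained mh).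
- by move=> q; rewrite lee_fin.
Qed.

Lemma riskl_point_prob g : meas_fin g -> riskl l P g = (\sum_y p y * l (g x0) y)%:E.
Proof.
move=> mg; rewrite /riskl integral_point_prob //.
- by rewrite -sumEFin; apply: eq_bigr => y _; rewrite EFinM.
- apply/measurable_EFinP; apply: (measurable_fun_label (F := fun x y => l (g x) y)) => y.
  exact: measurable_fun_meas_fin (l^~ y) mg.
- by move=> q; rewrite lee_fin.
Qed.

Lemma regretL_point_prob_cst b u : (forall u, b <= \sum_y p y * L u y) ->
  (0%:E <= regretL L P (fun _ => u) <= (\sum_y p y * L u y - b)%:E)%E.
Proof.
move=> b_le; rewrite /regretL (riskL_point_prob (meas_rV_cst _ u)).
set J := ereal_inf [set riskL L P h' | h' in [set h' | meas_rV h']].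
have J_ge : (b%:E <= J)%E.
  by apply/ereal_infP => _ [h mh <-]; rewrite riskL_point_prob // lee_fin.
have J_le : (J <= (\sum_y p y * L u y)%:E)%E.
  rewrite -(riskL_point_prob (meas_rV_cst _ u)); apply: ereal_inf_lbound.
  by exists (fun _ => u) => //; exact: meas_rV_cst.
have [j Jj] := EFin_between J_ge J_le; move: J_ge J_le.
by rewrite Jj -EFinB !lee_fin => ? ?; apply/andP; split; lra.
Qed.

Lemma regretl_point_prob_cst r0 r :
  ((\sum_y p y * l r0 y - \sum_y p y * l r y)%:E <= regretl l P (fun _ => r0))%E.
Proof.
rewrite /regretl (riskl_point_prob (meas_fin_cst _ r0)).
set I := ereal_inf [set riskl l P g' | g' in [set g' | meas_fin g']].
have I_ge : (0%:E <= I)%E.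
  apply/ereal_infP => _ [g mg <-]; rewrite riskl_point_prob // lee_fin.
  by apply: sumr_ge0 => y _; apply: mulr_ge0.
have I_le : (I <= (\sum_y p y * l r y)%:E)%E.
  rewrite -(riskl_point_prob (meas_fin_cst _ r)); apply: ereal_inf_lbound.
  by exists (fun _ => r) => //; exact: meas_fin_cst.
have [i Ii] := EFin_between I_ge I_le; move: I_le.
by rewrite Ii -EFinB !lee_fin => ?; lra.
Qed.

Lemma consistent_calibrated : consistent X L psi l ->
  forall r0 r, \sum_y p y * l r y < \sum_y p y * l r0 y ->
  forall b, (forall u, b <= \sum_y p y * L u y) ->
  exists2 del, 0 < del & forall u, psi u = r0 -> b + del <= \sum_y p y * L u y.
Proof.
(* Otherwise constant hypotheses [u k] with [psi (u k) = r0] have vanishing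
   surrogate regret on [P], while their target regret stays positive. *)
move=> consistent_psi r0 r r_better b b_le; apply: contrapT => no_gap.
have near_b k : exists u, psi u = r0 /\ \sum_y p y * L u y < b + k.+1%:R^-1.
  apply: contrapT => far; apply: no_gap; exists k.+1%:R^-1 => // u psi_u.
  by rewrite leNgt; apply/negP => lt; apply: far; exists u.
have [u u_near] := choice near_b.
have /consistent_psi : (fun k => regretL L P (fun _ => u k)) @ \oo --> 0%E.
  apply: (@squeeze_cvge _ _ _ _ (cst 0%E) _ (EFin \o harmonic)); last 2 first.
  - exact: cvg_cst.
  - exact: cvge_harmonic.
  apply: nearW => k /=.
  have /andP[-> /le_trans->//] := @regretL_point_prob_cst b (u k) b_le.
  by rewrite lee_fin lerBlDr addrC; have [_ /ltW] := u_near k.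
move=> /(_ (fun k => meas_rV_cst _ (u k))).
have -> : (fun k => regretl l P (psi \o (fun _ => u k))) = cst (regretl l P (fun _ => r0)).
  by apply/funext => k; congr regretl; apply/funext => x /=; have [] := u_near k.
move/(cvg_unique (@ereal_hausdorff R) (cvg_cst _)) => regret0.
by have := regretl_point_prob_cst r0 r; rewrite regret0 lee_fin subr_le0 leNgt r_better.
Qed.

End Calibration.

Lemma near_all_in (T : Type) (F : set_system T) (I : eqType) (s : seq I)
    (P : I -> T -> Prop) : Filter F ->
  (forall i, i \in s -> \forall x \near F, P i x) ->
  \forall x \near F, forall i, i \in s -> P i x.
Proof.
move=> FF; elim: s => [|i s IHs] Ps; first exact: nearW.
have {}IHs : \forall x \near F, forall j, j \in s -> P j x.
  by apply: IHs => j sj; apply: Ps; rewrite inE sj orbT.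
have Psi : \forall x \near F, P i x by apply: Ps; rewrite mem_head.
apply: (@filterS2 _ _ FF (P i) (fun x => forall j, j \in s -> P j x) _ _ Psi IHs).
by move=> x Pix Psx j; rewrite inE => /predU1P[->|/Psx].
Qed.

Section ShiftConstant.
Context (dX : measure_display) (X : measurableType dX) (R : realType) (d n : nat).
Context (Rep : finType) (l : Rep -> label n -> R) (L : 'rV[R]_d -> label n -> R).
Variables (psi : 'rV[R]_d -> Rep) (pc : label n -> seq ('rV[R]_d * R)).
Hypotheses (l_ge0 : forall r y, 0 <= l r y) (L_ge0 : forall u y, 0 <= L u y).
Hypothesis pc_le : forall y u q, q \in pc y -> affine q u <= L u y.
Hypothesis pc_attained : forall y u, exists2 q, q \in pc y & L u y = affine q u.
Hypothesis consistent_psi : consistent X L psi l.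
Variable x0 : X.

Lemma proj_cstr_gap c (r0 r : Rep) : c \in proj_cstrs pc ->
  0 < \sum_(y : label n) - c.1 y * (l r0 y - l r y) ->
  exists2 del, 0 < del &
    forall u, psi u = r0 -> del <= c.2 - \sum_(y : label n) c.1 y * L u y.
Proof.
move=> proj_c gain_gt0; pose s := \sum_(y : label n) - c.1 y.
have c_le0 := proj_cstr_le0 pc_le proj_c.
have s_gt0 : 0 < s.
  rewrite lt_neqAle sumr_ge0 => [|y _]; last by rewrite oppr_ge0; exact: c_le0.
  rewrite andbT eq_sym; apply: contraTneq gain_gt0 => /psumr_eq0P c0.
  rewrite big1 ?ltxx // => y _; rewrite c0 ?mul0r // => y' _.
  by rewrite oppr_ge0; exact: c_le0.
pose p (y : label n) := - c.1 y / s.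
have p_ge0 y : 0 <= p y by apply: divr_ge0; [rewrite oppr_ge0; exact: c_le0 | exact: ltW].
have p_sum1 : \sum_y p y = 1 by rewrite -mulr_suml divff ?gt_eqF.
have pE f : \sum_y p y * f y = - (\sum_(y : label n) c.1 y * f y) / s.
  by rewrite -sumrN mulr_suml; apply: eq_bigr => y _; rewrite /p mulrAC mulNr.
have L_ge u : - c.2 / s <= \sum_y p y * L u y.
  by rewrite pE ler_pM2r ?invr_gt0 // lerN2; exact: (proj_cstr_le pc_le u proj_c).
have r_better : \sum_y p y * l r y < \sum_y p y * l r0 y.
  rewrite -subr_gt0 -sumrB (eq_bigr (fun y => p y * (l r0 y - l r y))) => [|y _].
    rewrite pE divr_gt0 // -sumrN; under eq_bigr do rewrite -mulNr; exact: gain_gt0.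
  by rewrite mulrBr.
have [del del_gt0 gap] := consistent_calibrated l_ge0 L_ge0 pc_le pc_attained x0
  p_ge0 p_sum1 consistent_psi r_better L_ge.
exists (s * del) => [|u psi_u]; first exact: mulr_gt0.
have := gap u psi_u; rewrite pE -(ler_pM2r s_gt0) mulrDl !divfK ?gt_eqF //.
by rewrite mulrC; lra.
Qed.

Lemma proj_cstr_shift c (r0 r : Rep) : c \in proj_cstrs pc ->
  \forall C \near +oo, forall u, psi u = r0 ->
    \sum_(y : label n) c.1 y * (L u y - (l r0 y - l r y) / C) <= c.2.
Proof.
move=> proj_c; pose S := \sum_(y : label n) - c.1 y * (l r0 y - l r y).
have sumE C u : \sum_(y : label n) c.1 y * (L u y - (l r0 y - l r y) / C) =
    \sum_(y : label n) c.1 y * L u y + S / C.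
  by rewrite /S mulr_suml -big_split; apply: eq_bigr => y _ /=; ring.
have [S_le0|S_gt0] := leP S 0.
  near=> C => u _; rewrite sumE; have := proj_cstr_le pc_le u proj_c.
  have : S / C <= 0 by rewrite pmulr_lle0 // invr_gt0; near: C; exact: nbhs_pinfty_gt.
  lra.
have [del del_gt0 gap] := proj_cstr_gap proj_c S_gt0.
near=> C => u psi_u; rewrite sumE; have := gap u psi_u.
have C_gt0 : 0 < C by near: C; exact: nbhs_pinfty_gt.
have C_ge : S / del <= C by near: C; apply: nbhs_pinfty_ge; rewrite num_real.
have : S / C <= del by rewrite ler_pdivrMr // mulrC -ler_pdivrMr.
lra.
Unshelve. all: by end_near.
Qed.

Lemma shift_constant : exists2 C, 0 < C & forall u r,
  cstrs_sat n.+1 (proj_cstrs pc) (label_ext (shift_loss C (L u) (l (psi u)) (l r))).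
Proof.
have : \forall C \near +oo, 0 < C /\ forall c, c \in proj_cstrs pc -> forall r0 r u,
    psi u = r0 -> \sum_(y : label n) c.1 y * (L u y - (l r0 y - l r y) / C) <= c.2.
  near=> C; split; first by near: C; exact: nbhs_pinfty_gt.
  near: C; apply: near_all_in => c proj_c.
  apply: (filter_forall _) => r0; apply: (filter_forall _) => r.
  exact: proj_cstr_shift.
case/filter_ex => C [C_gt0 shift]; exists C => // u r.
by apply/cstrs_satP => c proj_c; rewrite /cstr_sat cstr_lhs_label_ext; exact: shift.
Unshelve. all: by end_near.
Qed.

End ShiftConstant.

Lemma ler_term_psum (R : numDomainType) (I : finType) (F : I -> R) i :
  (forall j, 0 <= F j) -> F i <= \sum_j F j.
Proof. by move=> F_ge0; rewrite (bigD1 i) //= lerDl sumr_ge0. Qed.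

Section Integrals.
Context (dT : measure_display) (T : measurableType dT) (R : realType).

Lemma ge0_integralDZ (mu : {measure set T -> \bar R}) (a b : T -> R) (C : R) : 0 <= C ->
  (forall t, 0 <= a t) -> (forall t, 0 <= b t) ->
  measurable_fun setT a -> measurable_fun setT b ->
  (\int[mu]_t (a t + C * b t)%:E = \int[mu]_t (a t)%:E + C%:E * \int[mu]_t (b t)%:E)%E.
Proof.
move=> C_ge0 a_ge0 b_ge0 ma mb.
rewrite (eq_integral (fun t => (a t)%:E + C%:E * (b t)%:E)%E); last first.
  by move=> t _; rewrite EFinD EFinM.
rewrite ge0_integralD //; last 4 first.
- by move=> t _; rewrite lee_fin.
- exact/measurable_EFinP.
- by move=> t _; rewrite -EFinM lee_fin mulr_ge0.
- by apply/measurable_EFinP; apply: measurable_funM.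
rewrite ge0_integralZl_EFin // => [t _|]; [by rewrite lee_fin | exact/measurable_EFinP].
Qed.

Variable P : probability T R.

Lemma integral_le_bound (f : T -> R) B : measurable_fun setT f ->
  (forall t, 0 <= f t) -> (forall t, f t <= B) -> (\int[P]_t (f t)%:E <= B%:E)%E.
Proof.
move=> mf f_ge0 f_le; apply: (@le_trans _ _ (\int[P]_t (cst B%:E) t)%E).
  apply: ge0_le_integral => //= [t _||t _]; rewrite ?lee_fin //.
  exact/measurable_EFinP.
rewrite integral_cst //; set m := (X in (_ * X <= _)%E).
by rewrite (_ : m = 1%E) ?mule1 //; exact: probability_setT.
Qed.

Lemma probability_inhabited : inhabited T.
Proof.
apply: contrapT => T_empty.
have setT0 : [set: T] = set0 by apply/seteqP; split => // t _; apply: T_empty.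
have := probability_setT P; rewrite setT0 measure0 => /(congr1 fine) /= /eqP.
by rewrite eq_sym oner_eq0.
Qed.

End Integrals.

Section RegretTransfer.
Context (dX : measure_display) (X : measurableType dX) (R : realType) (d n : nat).
Context (Rep : finType) (l : Rep -> label n -> R) (L : 'rV[R]_d -> label n -> R).
Hypotheses (l_ge0 : forall r y, 0 <= l r y) (L_ge0 : forall u y, 0 <= L u y).
Hypothesis measurable_L :
  forall h : X -> 'rV[R]_d, meas_rV h -> forall y, measurable_fun setT (fun x => L (h x) y).
Variable D : probability (X * label n)%type R.

Let measurable_l_comp g : meas_fin g ->
  measurable_fun setT (fun q : X * label n => l (g q.1) q.2).
Proof.
move=> mg; apply: (measurable_fun_label (F := fun x y => l (g x) y)) => y.
exact: measurable_fun_meas_fin (l^~ y) mg.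
Qed.

Let measurable_L_comp h : meas_rV h ->
  measurable_fun setT (fun q : X * label n => L (h q.1) q.2).
Proof.
move=> mh; apply: (measurable_fun_label (F := fun x y => L (h x) y)).
exact: measurable_L.
Qed.

Lemma riskl_bounds g : meas_fin g ->
  (0%:E <= riskl l D g <= (\sum_r \sum_y l r y)%:E)%E.
Proof.
move=> mg; rewrite integral_ge0 => [|q _]; last by rewrite lee_fin.
apply: integral_le_bound => [|//|[x y]]; first exact: measurable_l_comp.
apply: le_trans (ler_term_psum _ _) _ => [y'|]; first exact: l_ge0.
by apply: ler_term_psum => r; apply: sumr_ge0.
Qed.

Lemma inf_riskL_bounds : (0%:E <=
  ereal_inf [set riskL L D h | h in [set h | meas_rV h]] <= (\sum_y L 0 y)%:E)%E.
Proof.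
apply/andP; split.
  by apply/ereal_infP => _ [h _ <-]; apply: integral_ge0 => q _; rewrite lee_fin.
apply: le_trans (ereal_inf_lbound _) _.
  by exists (fun _ => 0) => //; exact: meas_rV_cst.
apply: integral_le_bound => [|//|[x y]]; last exact: ler_term_psum.
exact: measurable_L_comp (meas_rV_cst _ 0).
Qed.

Lemma risk_improvement (C : R) g0 g h h' : 0 <= C ->
  meas_fin g0 -> meas_fin g -> meas_rV h -> meas_rV h' ->
  (forall x y, l (g0 x) y + C * L (h' x) y <= l (g x) y + C * L (h x) y) ->
  (riskl l D g0 + C%:E * riskL L D h' <= riskl l D g + C%:E * riskL L D h)%E.
Proof.
move=> C_ge0 mg0 mg mh mh' improve.
rewrite /riskl /riskL -!ge0_integralDZ //;
  try first [exact: measurable_l_comp | exact: measurable_L_comp].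
apply: ge0_le_integral => //= [q _|||q _].
- by rewrite lee_fin addr_ge0 // mulr_ge0.
- apply/measurable_EFinP; apply: measurable_funD; first exact: measurable_l_comp.
  by apply: measurable_funM => //; exact: measurable_L_comp.
- apply/measurable_EFinP; apply: measurable_funD; first exact: measurable_l_comp.
  by apply: measurable_funM => //; exact: measurable_L_comp.
- by rewrite lee_fin improve.
Qed.

Lemma regretl_le_regretL (C : R) g0 h : 0 < C -> meas_fin g0 -> meas_rV h ->
  (forall g, meas_fin g -> exists2 h', meas_rV h' &
    forall x y, l (g0 x) y + C * L (h' x) y <= l (g x) y + C * L (h x) y) ->
  (regretl l D g0 <= C%:E * regretL L D h)%E.
Proof.
move=> C_gt0 mg0 mh improve; rewrite /regretl /regretL.
have /andP[J_ge0 J_le] := inf_riskL_bounds; have [j Jj] := EFin_between J_ge0 J_le.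
have /andP[A_ge0 A_le] := riskl_bounds mg0; have [a Aa] := EFin_between A_ge0 A_le.
have [i Ii] : exists i, ereal_inf [set riskl l D g | g in [set g | meas_fin g]] = i%:E.
  apply: (EFin_between (a := 0) (b := a)).
    by apply/ereal_infP => _ [g mg <-]; have /andP[] := riskl_bounds mg.
  by rewrite -Aa; apply: ereal_inf_lbound; exists g0.
have B_ge0 : (0%:E <= riskL L D h)%E by apply: integral_ge0 => q _; rewrite lee_fin.
rewrite Aa Ii Jj; case Bb: (riskL L D h) => [b| |]; last 2 first.
- by rewrite gt0_muley ?lte_fin // leey.
- by rewrite Bb in B_ge0.
suff : a + C * j - C * b <= i by rewrite -!EFinB -EFinM lee_fin mulrBr; lra.
rewrite -lee_fin -Ii; apply/ereal_infP => _ [g mg <-].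
have [h' mh' improve_g] := improve g mg.
have /andP[G_ge0 G_le] := riskl_bounds mg; have [a' Ga'] := EFin_between G_ge0 G_le.
have := risk_improvement (ltW C_gt0) mg0 mg mh mh' improve_g; rewrite Aa Ga' Bb.
have : (j%:E <= riskL L D h')%E by rewrite -Jj; apply: ereal_inf_lbound; exists h'.
case: (riskL L D h') => [b'| |] // j_le.
  by rewrite -!EFinM -!EFinD !lee_fin in j_le * => improve_risk; nra.
by rewrite gt0_muley ?lte_fin // -EFinM -EFinD.
Qed.

End RegretTransfer.

Theorem theorem7 (dX : measure_display) (X : measurableType dX) (R : realType)
  (d n : nat) (Rep : finType)
  (l : Rep -> label n -> R) (L : 'rV[R]_d -> label n -> R)
  (psi : 'rV[R]_d -> Rep) :
  (forall r y, 0 <= l r y) ->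
  (forall u y, 0 <= L u y) ->
  polyhedral L ->
  meas_link psi ->
  consistent X L psi l ->
  exists c : R, 0 < c /\
    forall (h : X -> 'rV[R]_d) (D : probability (X * label n)%type R),
      meas_rV h ->
      (regretl l D (psi \o h) <= c%:E * regretL L D h)%E.
Proof.
move=> l_ge0 L_ge0 L_poly psi_meas consistent_psi.
have [pc [pc_le pc_attained]] := polyhedral_pieces L_poly.
have measurable_L := measurable_pieces_comp (X := X) pc_le pc_attained.
have [[x0]|X_empty] := pselect (inhabited X); last first.
  exists 1; split => // h D; have [[x _]] := probability_inhabited D.
  by case: X_empty; constructor.
have [C C_gt0 shiftC] := shift_constant l_ge0 L_ge0 pc_le pc_attained consistent_psi x0.
exists C; split => // h D mh; have mpsih := meas_fin_comp mh psi_meas.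
apply: (regretl_le_regretL l_ge0 L_ge0 measurable_L D C_gt0 mpsih mh) => g mg.
exists (fun x => epi_select pc (shift_loss C (L (h x)) (l (psi (h x))) (l (g x)))).
  apply: meas_rV_epi_select => y; apply: measurable_funB; first exact: measurable_L.
  apply: measurable_funM => //; apply: measurable_funB.
    exact: measurable_fun_meas_fin (l^~ y) mpsih.
  exact: measurable_fun_meas_fin (l^~ y) mg.
by move=> x; apply: epi_select_shift => //; exact: shiftC.
Qed.
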